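(* Let $n\ge1$, $q$ a prime power, $s\in\mathbb{F}_q$, and let $(\mathsf{Enc},\mathcal{A})$ be an $n$-party one-round aggregation protocol over $\mathbb{F}_q$ with encoder $\mathsf{Enc}:\mathbb{F}_q\to[\ell]^m$. For every $\mathbf{y}\in[\ell]^{nm}$, the set $\mathrm{Inv}_{\mathbf{y}}=\{\mathbf{x}\in\mathcal{B}_s:\Pr_{Y\sim\mathcal{S}^{\mathsf{Enc}}_{\mathbf{x}}}[Y=\mathbf{y}]>0\}$ satisfies $|\mathrm{Inv}_{\mathbf{y}}|\le n^{nm}$.
   Context: $\mathcal{B}_s=\{\mathbf{x}\in\mathbb{F}_q^n:\sum_ix_i=s\}$. An $n$-party one-round aggregation protocol over $\mathbb{F}_q$ with $m$ messages per party consists of a randomized encoder $\mathsf{Enc}:\mathbb{F}_q\to[\ell]^m$ (for some positive integer $\ell$; each party applies it to its input with independent randomness) and an analyzer $\mathcal{A}:[\ell]^{nm}\to\mathbb{F}_q$ such that for every $\mathbf{x}\in\mathbb{F}_q^n$, every possible realization of the encodings $\mathsf{Enc}(x_1),\dots,\mathsf{Enc}(x_n)$, and every permutation $\pi$ of $[nm]$, the analyzer applied to the concatenation $(\mathsf{Enc}(x_1),\dots,\mathsf{Enc}(x_n))$ with coordinates permuted by $\pi$ outputs $\sum_i x_i$. $\mathcal{S}^{\mathsf{Enc}}_{\mathbf{x}}$ is the distribution on $[\ell]^{nm}$ of this concatenation after applying an independent uniformly random permutation of the $nm$ coordinates. *)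

From HB Require Import structures.
From mathcomp Require Import all_boot all_order all_algebra all_fingroup.
Set Implicit Arguments. Unset Strict Implicit. Unset Printing Implicit Defensive.
Import Order.TTheory GRing.Theory Num.Theory.
Local Open Scope ring_scope.

(* Messages are elements of [l] = 'I_l.  An encoding of one party is a
   vector in [l]^m, represented as {ffun 'I_m -> 'I_l}.  A transcript of
   all parties is a row vector in [l]^(n*m). *)

(* concatenation (Enc(x_1),...,Enc(x_n)) : party i's j-th message sits at
   coordinate mxvec_index i j *)
Definition concat_enc (n m l : nat) (e : {ffun 'I_n -> {ffun 'I_m -> 'I_l}})
  : 'rV['I_l]_(n * m) :=
  mxvec (\matrix_(i < n, j < m) e i j).

Definition permute_coords (N l : nat) (pi : 'S_N) (v : 'rV['I_l]_N) : 'rV['I_l]_N :=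
  col_perm pi v.

Definition is_distr (T : finType) (p : T -> rat) : Prop :=
  (forall t, 0 <= p t) /\ \sum_(t : T) p t = 1.

Definition is_encoder (F : finFieldType) (m l : nat)
  (Enc : F -> {ffun 'I_m -> 'I_l} -> rat) : Prop :=
  forall a : F, is_distr (Enc a).

(* Pr_{Y ~ S^Enc_x}[Y = y]: independent encodings, then a uniformly random
   permutation of the nm coordinates *)
Definition shuffled_prob (F : finFieldType) (n m l : nat)
  (Enc : F -> {ffun 'I_m -> 'I_l} -> rat) (x : {ffun 'I_n -> F})
  (y : 'rV['I_l]_(n * m)) : rat :=
  \sum_(e : {ffun 'I_n -> {ffun 'I_m -> 'I_l}})
   \sum_(pi : 'S_(n * m))
     ((\prod_(i < n) Enc (x i) (e i)) / ((n * m)`!)%N%:R) *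
       (permute_coords pi (concat_enc e) == y)%:R.

Definition is_aggregation_protocol (F : finFieldType) (n m l : nat)
  (Enc : F -> {ffun 'I_m -> 'I_l} -> rat)
  (A : 'rV['I_l]_(n * m) -> F) : Prop :=
  is_encoder Enc /\
  forall (x : {ffun 'I_n -> F}) (e : {ffun 'I_n -> {ffun 'I_m -> 'I_l}})
         (pi : 'S_(n * m)),
    (forall i, 0 < Enc (x i) (e i)) ->
    A (permute_coords pi (concat_enc e)) = \sum_(i < n) x i.

Definition Bset (F : finFieldType) (n : nat) (s : F) : {set {ffun 'I_n -> F}} :=
  [set x : {ffun 'I_n -> F} | \sum_(i < n) x i == s].

Definition Inv (F : finFieldType) (n m l : nat)
  (Enc : F -> {ffun 'I_m -> 'I_l} -> rat) (s : F) (y : 'rV['I_l]_(n * m))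
  : {set {ffun 'I_n -> F}} :=
  [set x in Bset n s | 0 < shuffled_prob Enc x y].

(* For each x in Inv_y fix a realization (e, pi): encodings of positive
   probability whose concatenation, permuted by pi, is y.  Record only the
   labelling k |-> (party owning coordinate pi k), a map [nm] -> [n]; there
   are n^(nm) of them.  If x and x' yield the same labelling then, for any
   party i, the coordinates of y carrying party i's messages are the same in
   both realizations, so replacing Enc(x_i) by Enc(x'_i) in the first one
   still produces y after a suitable permutation.  The analyzer must then
   output both sum x and sum x with x_i replaced by x'_i, so x_i = x'_i:
   the labelling determines x. *)
From HB Require Import structures.
From mathcomp Require Import all_boot all_order all_algebra all_fingroup.
Import Order.TTheory GRing.Theory Num.Theory.

Set Implicit Arguments. Unset Strict Implicit. Unset Printing Implicit Defensive.

Section MergePerm.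
Variables (T I : finType) (f : T -> I) (pi pi' : {perm T}) (P : pred I).
Hypothesis f_pi : forall k, f (pi k) = f (pi' k).

Definition merge_fun k := if P (f (pi k)) then pi' k else pi k.

Lemma merge_fun_inj : injective merge_fun.
Proof.
move=> k1 k2; rewrite /merge_fun.
case: ifP => P1; case: ifP => P2; try exact: perm_inj.
- by move=> E; rewrite f_pi E P2 in P1.
- by move=> E; rewrite f_pi -E P1 in P2.
Qed.

Definition merge_perm : {perm T} := perm merge_fun_inj.

Lemma merge_permE k : merge_perm k = merge_fun k.
Proof. exact: permE. Qed.

End MergePerm.

Section Coordinates.
Local Open Scope ring_scope.
Variables (n m l : nat).

Definition party (k : 'I_(n * m)) : 'I_n :=
  (enum_val (cast_ord (esym (mxvec_cast n m)) k)).1.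

Lemma party_mxvec_index i j : party (mxvec_index i j) = i.
Proof. by rewrite /party /mxvec_index cast_ordK enum_rankK. Qed.

Lemma concat_enc_mxvec_index (e : {ffun 'I_n -> {ffun 'I_m -> 'I_l}}) i j :
  concat_enc e 0 (mxvec_index i j) = e i j.
Proof. by rewrite /concat_enc mxvecE mxE. Qed.

Lemma concat_enc_eq_party (e e' : {ffun 'I_n -> {ffun 'I_m -> 'I_l}}) k :
  e (party k) = e' (party k) -> concat_enc e 0 k = concat_enc e' 0 k.
Proof.
case/mxvec_indexP: k => i j.
by rewrite party_mxvec_index !concat_enc_mxvec_index => ->.
Qed.

Definition labelling (pi : 'S_(n * m)) : {ffun 'I_(n * m) -> 'I_n} :=
  [ffun k => party (pi k)].

End Coordinates.

Definition ffun_set (I : finType) (T : Type) (f : {ffun I -> T}) i a :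
  {ffun I -> T} := [ffun t => if t == i then a else f t].

Lemma ffun_setE (I : finType) (T : Type) (f : {ffun I -> T}) i a t :
  ffun_set f i a t = if t == i then a else f t.
Proof. exact: ffunE. Qed.

Lemma sum_ffun_set (I : finType) (V : nmodType) (f : {ffun I -> V}) i a :
  (\sum_t ffun_set f i a t = a + \sum_(t | t != i) f t)%R.
Proof.
rewrite (bigD1 i) //= ffun_setE eqxx; congr (_ + _)%R.
by apply: eq_bigr => t /negPf t_ni; rewrite ffun_setE t_ni.
Qed.

Section Realizations.
Local Open Scope ring_scope.
Variables (F : finFieldType) (n m l : nat).
Variable Enc : F -> {ffun 'I_m -> 'I_l} -> rat.
Implicit Types (x : {ffun 'I_n -> F}) (y : 'rV['I_l]_(n * m))
  (e : {ffun 'I_n -> {ffun 'I_m -> 'I_l}}) (pi : 'S_(n * m)).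

Definition realizes x y (ep : {ffun 'I_n -> {ffun 'I_m -> 'I_l}} * 'S_(n * m)) :=
  [forall i, 0 < Enc (x i) (ep.1 i)] && (permute_coords ep.2 (concat_enc ep.1) == y).

Lemma shuffled_prob_gt0_realizes x y :
  is_encoder Enc -> 0 < shuffled_prob Enc x y -> exists ep, realizes x y ep.
Proof.
move=> Enc_distr prob_gt0; have [ep | no_ep] := pickP (realizes x y); first by exists ep.
suff : shuffled_prob Enc x y <= 0 by rewrite leNgt prob_gt0.
apply: sumr_le0 => e _; apply: sumr_le0 => pi _.
have /negbT := no_ep (e, pi); rewrite negb_and => /orP[/forallPn[i Ei] | /negPf->];
  last by rewrite mulr0.
have Ei0 : Enc (x i) (e i) = 0.
  by apply/eqP; rewrite eq_le (proj1 (Enc_distr _) _) andbT leNgt.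
by rewrite (bigD1 i) //= Ei0 !mul0r.
Qed.

Lemma realizes_ffun_set x x' y e e' pi pi' i :
  labelling pi = labelling pi' ->
  realizes x y (e, pi) -> realizes x' y (e', pi') ->
  exists sigma, realizes (ffun_set x i (x' i)) y (ffun_set e i (e' i), sigma).
Proof.
move=> /ffunP same_lab /andP[/forallP/= Epos /eqP Ey] /andP[/forallP/= Epos' /eqP Ey'].
have party_pi k : party (pi k) = party (pi' k) by have := same_lab k; rewrite !ffunE.
exists (merge_perm (pred1 i) party_pi); apply/andP; split.
  apply/forallP => t /=; rewrite !ffun_setE.
  by case: eqP => _; [exact: Epos' | exact: Epos].
apply/eqP/rowP => k; rewrite /permute_coords mxE merge_permE /merge_fun /=.
case: eqP => [pi_k_i | pi_k_ni].
- rewrite -Ey' /permute_coords mxE; apply: concat_enc_eq_party.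
  by rewrite ffun_setE -party_pi pi_k_i eqxx.
- rewrite -Ey /permute_coords mxE; apply: concat_enc_eq_party.
  by rewrite ffun_setE; case: eqP.
Qed.

Lemma realizes_same_labelling_eq (A : 'rV['I_l]_(n * m) -> F) x x' y e e' pi pi' :
  is_aggregation_protocol Enc A -> labelling pi = labelling pi' ->
  realizes x y (e, pi) -> realizes x' y (e', pi') -> x = x'.
Proof.
move=> [_ A_sum] same_lab real real'; apply/ffunP => i.
have [sigma /andP[/forallP/= Epos /eqP Ey]] := realizes_ffun_set i same_lab real real'.
have /andP[/forallP/= Epos0 /eqP Ey0] := real.
have := A_sum _ _ sigma Epos; rewrite Ey -Ey0 (A_sum _ _ pi Epos0).
by rewrite sum_ffun_set (bigD1 i) //= => /addIr.
Qed.

End Realizations.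

Theorem mainTheorem12 (F : finFieldType) (n m l : nat) (s : F)
  (Enc : F -> {ffun 'I_m -> 'I_l} -> rat) (A : 'rV['I_l]_(n * m) -> F) :
  (1 <= n)%N -> (0 < l)%N ->
  is_aggregation_protocol Enc A ->
  forall y : 'rV['I_l]_(n * m),
    (#|Inv Enc s y| <= n ^ (n * m))%N.
Proof.
move=> _ _ protocol y; have [Enc_distr _] := protocol.
pose lab x := if [pick ep | realizes Enc x y ep] is Some ep then labelling ep.2
              else labelling 1%g.
have -> : (n ^ (n * m) = #|{ffun 'I_(n * m) -> 'I_n}|)%N by rewrite card_ffun !card_ord.
apply: (@leq_card_in _ _ lab) => x x'.
rewrite !inE => /andP[_ /(shuffled_prob_gt0_realizes Enc_distr) [ep real]].
move=> /andP[_ /(shuffled_prob_gt0_realizes Enc_distr) [ep' real']].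
rewrite /lab; case: pickP => [[e pi] real_x | /(_ ep)]; last by rewrite real.
case: pickP => [[e' pi'] real_x' | /(_ ep')]; last by rewrite real'.
by move=> /= same_lab; apply: realizes_same_labelling_eq protocol same_lab real_x real_x'.
Qed.
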